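(* Let $N\ge k$ and let $L=L_0+L_s$ be the generator defined in the context. For $V(x)=\frac{1}{N(N-1)}\sum_{1\le m<n\le N}(x_m-x_n)^2$ one has, for all $x\in\mathbb{R}^N$, $$(LV)(x)=\alpha b_2-\frac{\delta\varkappa}{N(N-1)}V(x),\qquad\text{where } \varkappa=\sum_{j=1}^l k_j^2-k>0 .$$
   Context: Fix an integer $k\ge2$ and integers $k_1,\dots,k_l\ge2$ with $k_1+\dots+k_l=k$ (the ''signature'', fixed independently of $N$). For $N\ge k$, let $\mathcal I$ be the set of ordered $k$-tuples $(i_1,\dots,i_k)$ of pairwise distinct elements of $\{1,\dots,N\}$. For $(i_1,\dots,i_k)\in\mathcal I$ split it into consecutive blocks $\Gamma_1,\dots,\Gamma_l$ of lengths $k_1,\dots,k_l$: $\Gamma_j=(i_{k_1+\dots+k_{j-1}+1},\dots,i_{k_1+\dots+k_j})$, and let $g_j=i_{k_1+\dots+k_{j-1}+1}$ be the first element of $\Gamma_j$. The synchronization map $J^{(i_1,\dots,i_k)}:\mathbb{R}^N\to\mathbb{R}^N$, $x\mapsto y$, is $y_m=x_m$ if $m\notin\{i_1,\dots,i_k\}$ and $y_m=x_{g_j}$ if $m\in\Gamma_j$. Let $\alpha>0,\delta>0$, and let $\rho$ be a probability measure on $\mathbb{R}$ with compact support and $b_2:=\int z^2\rho(dz)>0$. The generator $L=L_0+L_s$ acts on functions $f:\mathbb{R}^N\to\mathbb{R}$ by $(L_0f)(x)=\alpha\sum_{i=1}^N\int\big(f(x+ze_i)-f(x)\big)\rho(dz)$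 ($e_i$ the $i$-th unit vector) and $(L_sf)(x)=\frac{\delta}{N(N-1)\cdots(N-k+1)}\sum_{(i_1,\dots,i_k)\in\mathcal I}\big(f(J^{(i_1,\dots,i_k)}x)-f(x)\big)$. The function $V$ equals the empirical variance $\frac1{N-1}\sum_m(x_m-M(x))^2$, $M(x)=\frac1N\sum_m x_m$. *)

From HB Require Import structures.
From mathcomp Require Import all_boot all_order all_algebra.
From mathcomp Require Import all_classical all_reals all_analysis.
Set Implicit Arguments. Unset Strict Implicit. Unset Printing Implicit Defensive.
Import Order.TTheory GRing.Theory Num.Theory.
Local Open Scope ring_scope.
Local Open Scope classical_set_scope.

(* Position (0-based, in 'I_k) of the first element of the block containing
   position p, for consecutive blocks of lengths ks = [:: k_1; ...; k_l]. *)
Fixpoint block_start (ks : seq nat) (p : nat) : nat :=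
  match ks with
  | [::] => 0%N
  | kj :: ks' => if (p < kj)%N then 0%N else (kj + block_start ks' (p - kj))%N
  end.

Section Gen.
Variables (R : realType) (N k : nat) (ks : seq nat).

(* synchronization map J^{(i_1,...,i_k)} ; the k-tuple is t : 'I_k -> 'I_N *)
Definition sync (t : {ffun 'I_k -> 'I_N}) (x : 'I_N -> R) : 'I_N -> R :=
  fun m => match [pick p | t p == m] with
           | Some p => x (t (insubd p (block_start ks p)))
           | None => x m
           end.

Definition shift (x : 'I_N -> R) (i : 'I_N) (z : R) : 'I_N -> R :=
  fun m => x m + (if m == i then z else 0).

Definition L0 (alpha : R) (rho : probability R R) (f : ('I_N -> R) -> R)
  (x : 'I_N -> R) : R :=
  alpha * \sum_(i < N) Rintegral rho setT (fun z => f (shift x i z) - f x).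

Definition Ls (delta : R) (f : ('I_N -> R) -> R) (x : 'I_N -> R) : R :=
  delta / (N ^_ k)%:R *
  \sum_(t : {ffun 'I_k -> 'I_N} | injectiveb t) (f (sync t x) - f x).

Definition Lgen alpha rho delta f x : R := L0 alpha rho f x + Ls delta f x.

Definition Vfun (x : 'I_N -> R) : R :=
  ((N * (N - 1))%:R)^-1 *
  \sum_(m < N) \sum_(n < N | (m < n)%N) (x m - x n) ^+ 2.

Definition kappa : R := (\sum_(kj <- ks) kj ^ 2)%N%:R - k%:R.
End Gen.

Definition compact_support (R : realType) (rho : probability R R) : Prop :=
  exists c : R, rho [set z : R | c < `|z|] = 0%E.

From HB Require Import structures.
From mathcomp Require Import all_boot all_order all_algebra.
From mathcomp Require Import all_classical all_reals all_analysis.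
From mathcomp Require Import ring lra zify fingroup perm.
From mathcomp Require Import measurable_realfun lebesgue_integrable lebesgue_Rintegral.
Import Order.TTheory GRing.Theory Num.Theory.
Set Implicit Arguments.
Unset Strict Implicit.
Unset Printing Implicit Defensive.

Local Open Scope ring_scope.

(* Write [V = (N p2 - p1^2) / (N (N - 1))] with the power sums [p1 = sum x_m] and
   [p2 = sum x_m^2].  A jump [x -> x + z e_i] changes [N p2 - p1^2] by
   [2 z (N x_i - p1) + (N - 1) z^2], whose linear part cancels in the sum over [i],
   leaving [alpha b2].  A synchronization copies the first coordinate of each block
   onto the whole block and changes [N p2 - p1^2] by [N dp2 - 2 p1 dp1 - dp1^2].
   Averaged over injective tuples [t], each [t_p] is uniform on [{1..N}] and each
   [(t_p, t_q)], [p <> q], is uniform on pairs of distinct indices; hence [dp2] and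
   [dp1] average to [0], while [dp1^2] averages to [kappa V], [kappa + k] being the
   number of pairs [(p, q)] of positions in a common block. *)

Section SecondMoment.
Variables (R : realType) (rho : probability R R).
Hypothesis m2_gt0 : 0 < Rintegral rho setT (fun z => z ^+ 2).

(* [Rintegral] is [0] on an infinite integral, so positivity forces finiteness. *)
Lemma integrable_sqr : rho.-integrable setT (EFin \o (fun z : R => z ^+ 2)).
Proof.
apply/integrableP; split; first by apply/measurable_EFinP; exact: exprn_measurable.
rewrite (eq_integral (fun z : R => (z ^+ 2)%:E)); last first.
  by move=> z _; rewrite /= ger0_norm ?sqr_ge0.
rewrite ltey; apply/eqP => infinite.
by move: m2_gt0; rewrite /Rintegral infinite ltxx.
Qed.

Lemma integrable_id : rho.-integrable setT (EFin \o (fun z : R => z)).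
Proof.
have one_sqr := integrableD measurableT
  (finite_measure_integrable_cst rho 1 measurableT) integrable_sqr.
apply: (le_integrable measurableT _ _ one_sqr); first exact/measurable_EFinP.
move=> z _; rewrite /= lee_fin [`|1 + _|]ger0_norm; last by rewrite addr_ge0 ?sqr_ge0.
by case: (lerP 0 z) => hz; [rewrite ger0_norm | rewrite ltr0_norm]; nra.
Qed.

Lemma Rintegral_lin_sqr (a b : R) :
  Rintegral rho setT (fun z => a * z + b * z ^+ 2) =
  a * Rintegral rho setT (fun z => z) + b * Rintegral rho setT (fun z => z ^+ 2).
Proof.
have i1 := integrable_id; have i2 := integrable_sqr.
rewrite RintegralD ?RintegralZl //.
- exact: eq_integrable (integrableZl measurableT a i1).
- exact: eq_integrable (integrableZl measurableT b i2).
Qed.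

End SecondMoment.

Lemma sum_sym_offdiag (R : nmodType) (N : nat) (F : 'I_N -> 'I_N -> R) :
  (forall m n, F m n = F n m) -> (forall m, F m m = 0) ->
  \sum_(m < N) \sum_(n < N) F m n = (\sum_(m < N) \sum_(n < N | (m < n)%N) F m n) *+ 2.
Proof.
move=> Fsym Fdiag.
have Fsplit m n : F m n = (if (m < n)%N then F m n else 0) + (if (n < m)%N then F n m else 0).
  case: ltngtP => [_|_|/val_inj->]; first by rewrite addr0.
    by rewrite add0r; apply: Fsym.
  by rewrite Fdiag addr0.
under eq_bigr do rewrite (eq_bigr _ (fun n _ => Fsplit _ n)) big_split /=.
rewrite big_split /= [X in _ + X]exchange_big /= mulr2n.
by congr (_ + _); apply: eq_bigr => m _; rewrite [RHS]big_mkcond.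
Qed.

Lemma sum_sqr_diff_lt (R : numFieldType) (N : nat) (x : 'I_N -> R) :
  \sum_(m < N) \sum_(n < N | (m < n)%N) (x m - x n) ^+ 2 =
  N%:R * \sum_(m < N) x m ^+ 2 - (\sum_(m < N) x m) ^+ 2.
Proof.
set A := \sum_(m < N) x m ^+ 2; set B := \sum_(m < N) x m.
apply: (@mulIf _ 2); first by rewrite pnatr_eq0.
rewrite !mulr_natr -sum_sym_offdiag; last 2 first.
- by move=> m n; rewrite -sqrrN opprB.
- by move=> m; rewrite subrr expr0n.
transitivity (\sum_(m < N) (x m ^+ 2 *+ N - (x m * B) *+ 2 + A)).
  apply: eq_bigr => m _; rewrite (eq_bigr _ (fun n _ => sqrrB (x m) (x n))).
  by rewrite !big_split /= sumr_const card_ord sumrN sumrMnl -mulr_sumr.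
rewrite !big_split /= sumrN !sumrMnl -mulr_suml sumr_const card_ord -/A -/B.
ring.
Qed.

Lemma natrM_subn1 (R : pzRingType) (n : nat) :
  (0 < n)%N -> (n * (n - 1))%:R = n%:R * (n%:R - 1) :> R.
Proof. by move=> n_gt0; rewrite natrM natrB. Qed.

Lemma natrM_subn1_neq0 (R : numDomainType) (n : nat) :
  (1 < n)%N -> n%:R * (n%:R - 1) != 0 :> R.
Proof.
move=> n_gt1; rewrite -natrM_subn1 ?(ltnW n_gt1) // pnatr_eq0 muln_eq0 negb_or.
by rewrite -!lt0n subn_gt0 n_gt1 (ltnW n_gt1).
Qed.

Section EmpiricalVariance.
Variables (R : realType) (N : nat).
Implicit Types (x : 'I_N -> R).

Definition psum1 x := \sum_(m < N) x m.
Definition psum2 x := \sum_(m < N) x m ^+ 2.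

Lemma Vfun_psum x :
  Vfun x = ((N * (N - 1))%:R)^-1 * (N%:R * psum2 x - psum1 x ^+ 2).
Proof. by rewrite /Vfun sum_sqr_diff_lt. Qed.

Lemma psum1_shift x i z : psum1 (shift x i z) = psum1 x + z.
Proof. by rewrite /psum1 /shift big_split /= -big_mkcond big_pred1_eq. Qed.

Lemma psum2_shift x i z : psum2 (shift x i z) = psum2 x + (2 * z * x i + z ^+ 2).
Proof.
rewrite /psum2 /shift (eq_bigr (fun m => x m ^+ 2 +
  (if m == i then 2 * z * x m + z ^+ 2 else 0))); last first.
  by move=> m _; case: eqP => _; rewrite ?addr0 //; ring.
by rewrite big_split /= -big_mkcond big_pred1_eq.
Qed.

Lemma sum_offdiag_mul x :
  \sum_(u < N) \sum_(v < N | v != u) x u * x v = psum1 x ^+ 2 - psum2 x.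
Proof.
have row u : \sum_(v < N | v != u) x u * x v = x u * psum1 x - x u ^+ 2.
  by rewrite -mulr_sumr /psum1 [in RHS](bigD1 u) //=; ring.
rewrite (eq_bigr _ (fun u _ => row u)) sumrB -mulr_suml.
by rewrite -/(psum1 x) -/(psum2 x).
Qed.

Lemma L0_Vfun alpha (rho : probability R R) x :
  (2 <= N)%N -> 0 < Rintegral rho setT (fun z => z ^+ 2) ->
  L0 alpha rho (@Vfun R N) x = alpha * Rintegral rho setT (fun z => z ^+ 2).
Proof.
move=> N_ge2 m2_gt0; rewrite /L0; congr (_ * _).
set c := ((N * (N - 1))%:R : R)^-1.
have cN : c * (N%:R * (N%:R - 1)) = 1.
  by rewrite /c natrM_subn1 ?mulVf ?natrM_subn1_neq0 // ltnW.
have jump i : Rintegral rho setT (fun z => Vfun (shift x i z) - Vfun x) =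
    c * (2 * N%:R * x i - 2 * psum1 x) * Rintegral rho setT (fun z => z) +
    c * (N%:R - 1) * Rintegral rho setT (fun z => z ^+ 2).
  rewrite -Rintegral_lin_sqr //; apply: eq_Rintegral => z _.
  rewrite !Vfun_psum psum2_shift psum1_shift -/c; ring.
rewrite (eq_bigr _ (fun i _ => jump i)) big_split /= -!mulr_suml sumr_const card_ord.
have -> : \sum_(i < N) c * (2 * N%:R * x i - 2 * psum1 x) = 0.
  rewrite -mulr_sumr sumrB -mulr_sumr sumr_const card_ord -/(psum1 x).
  by rewrite -mulr_natl; ring.
by rewrite mul0r add0r -[c *+ N]mulr_natr -(mulrA c) cN mul1r.
Qed.

End EmpiricalVariance.

Lemma perm_map_pair {n : nat} {u v u' v' : 'I_n} : u != v -> u' != v' ->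
  exists s : {perm 'I_n}, s u = u' /\ s v = v'.
Proof.
move=> uv u'v'; exists (tperm u u' * tperm v' (tperm u u' v))%g; rewrite !permM.
split; last exact: tpermR.
rewrite tpermL (@tpermD _ v' (tperm u u' v) u') 1?eq_sym //.
by rewrite -[u' in u' != _](tpermL u u') (inj_eq perm_inj).
Qed.

Section InjectiveFfuns.
Variables (R : numFieldType) (N k : nat).
Local Notation injf := {ffun 'I_k -> 'I_N}.
Local Notation nInj := (N ^_ k)%:R.

Lemma sum_injf_1 : \sum_(t : injf | injectiveb t) 1 = nInj :> R.
Proof.
have := card_inj_ffuns 'I_k 'I_N; rewrite !card_ord => <-.
by rewrite cardsE -sum1_card natr_sum.
Qed.

Lemma sum_injf_perm (s : {perm 'I_N}) (F : injf -> R) :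
  \sum_(t : injf | injectiveb t) F t =
  \sum_(t : injf | injectiveb t) F [ffun i => s (t i)].
Proof.
have s_inj : injective (fun t : injf => [ffun i => s (t i)]).
  move=> t1 t2 /ffunP eq_st; apply/ffunP => i.
  by have := eq_st i; rewrite !ffunE => /perm_inj.
rewrite (reindex_inj s_inj) /=; apply: eq_bigl => t.
apply/injectiveP/injectiveP => t_inj i j.
  by move=> tij; apply: t_inj; rewrite !ffunE tij.
by rewrite !ffunE => /perm_inj /t_inj.
Qed.

Definition nfibre1 (a : 'I_k) (u : 'I_N) : R :=
  \sum_(t : injf | injectiveb t) (t a == u)%:R.

Definition nfibre2 (a b : 'I_k) (u v : 'I_N) : R :=
  \sum_(t : injf | injectiveb t) ((t a == u) && (t b == v))%:R.

Lemma sum_injf_fibre1 a (F : 'I_N -> R) :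
  \sum_(t : injf | injectiveb t) F (t a) = \sum_(u < N) nfibre1 a u * F u.
Proof.
rewrite (partition_big (fun t : injf => t a) predT) //; apply: eq_bigr => u _.
rewrite big_mkcondr mulr_suml; apply: eq_bigr => t _.
by case: eqP => [->|]; rewrite ?mul1r ?mul0r.
Qed.

Lemma sum_injf_fibre2 a b (F : 'I_N -> 'I_N -> R) :
  \sum_(t : injf | injectiveb t) F (t a) (t b) =
  \sum_(u < N) \sum_(v < N) nfibre2 a b u v * F u v.
Proof.
rewrite (partition_big (fun t : injf => (t a, t b)) predT) // pair_big /=.
apply: eq_bigr => -[u v] _; rewrite big_mkcondr mulr_suml; apply: eq_bigr => t _.
by rewrite xpair_eqE; case: andP => [[/eqP-> /eqP->]|]; rewrite ?mul1r ?mul0r.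
Qed.

Lemma nfibre1_perm (s : {perm 'I_N}) a u : nfibre1 a (s u) = nfibre1 a u.
Proof.
by rewrite /nfibre1 (sum_injf_perm s); apply: eq_bigr => t _; rewrite ffunE (inj_eq perm_inj).
Qed.

Lemma nfibre2_perm (s : {perm 'I_N}) a b u v : nfibre2 a b (s u) (s v) = nfibre2 a b u v.
Proof.
rewrite /nfibre2 (sum_injf_perm s); apply: eq_bigr => t _.
by rewrite !ffunE !(inj_eq perm_inj).
Qed.

Lemma nfibre2_diag a b u : a != b -> nfibre2 a b u u = 0.
Proof.
move=> ab; rewrite /nfibre2 big1 // => t /injectiveP t_inj.
by case: eqP => // <-; case: eqP => // /t_inj ba; rewrite ba eqxx in ab.
Qed.

Lemma nfibre1E a u : nfibre1 a u = nInj / N%:R.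
Proof.
have N_neq0 : N%:R != 0 :> R by rewrite pnatr_eq0 -lt0n (leq_ltn_trans _ (ltn_ord u)).
have total : \sum_(v < N) nfibre1 a v = nInj.
  rewrite -sum_injf_1 (sum_injf_fibre1 a (fun=> 1)).
  by apply: eq_bigr => v _; rewrite mulr1.
rewrite -total (eq_bigr (fun=> nfibre1 a u)); last first.
  by move=> v _; rewrite -(tpermL u v) nfibre1_perm.
by rewrite sumr_const card_ord -(mulr_natr (nfibre1 a u)) mulfK.
Qed.

Lemma nfibre2E a b u v : a != b -> u != v ->
  nfibre2 a b u v = nInj / (N%:R * (N%:R - 1)).
Proof.
move=> ab uv; have N_gt1 : (1 < N)%N.
  rewrite ltnNge; apply: contra uv => N_le1; apply/eqP/ord_inj.
  by have := ltn_ord u; have := ltn_ord v; lia.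
have total : \sum_(u' < N) \sum_(v' < N) nfibre2 a b u' v' = nInj.
  rewrite -sum_injf_1 (sum_injf_fibre2 a b (fun _ _ => 1)).
  by apply: eq_bigr => u' _; apply: eq_bigr => v' _; rewrite mulr1.
have offdiag u' : \sum_(v' < N) nfibre2 a b u' v' = nfibre2 a b u v *+ N.-1.
  rewrite (bigD1 u') //= nfibre2_diag // add0r.
  rewrite (eq_bigr (fun=> nfibre2 a b u v)) ?sumr_const ?cardC1 ?card_ord //.
  move=> v' v'u'; rewrite eq_sym in v'u'.
  by have [s [<- <-]] := perm_map_pair uv v'u'; rewrite nfibre2_perm.
rewrite -total (eq_bigr _ (fun u' _ => offdiag u')) sumr_const card_ord.
by rewrite -mulrnA mulnC -subn1 -(mulr_natr (nfibre2 a b u v)) natrM_subn1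
  ?mulfK ?natrM_subn1_neq0 ?(ltnW N_gt1).
Qed.


Lemma sum_injf_eval1 a (F : 'I_N -> R) :
  \sum_(t : injf | injectiveb t) F (t a) = nInj / N%:R * \sum_(u < N) F u.
Proof.
by rewrite sum_injf_fibre1 mulr_sumr; apply: eq_bigr => u _; rewrite nfibre1E.
Qed.

Lemma sum_injf_eval2 a b (F : 'I_N -> 'I_N -> R) : a != b ->
  \sum_(t : injf | injectiveb t) F (t a) (t b) =
  nInj / (N%:R * (N%:R - 1)) * \sum_(u < N) \sum_(v < N | v != u) F u v.
Proof.
move=> ab; rewrite sum_injf_fibre2 mulr_sumr; apply: eq_bigr => u _.
rewrite (bigD1 u) //= nfibre2_diag // mul0r add0r mulr_sumr.
by apply: eq_bigr => v vu; rewrite nfibre2E // eq_sym.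
Qed.

End InjectiveFfuns.

Lemma block_start_le ks p : (block_start ks p <= p)%N.
Proof.
elim: ks p => [|kj ks IH] p //=; case: ltnP => // kj_le_p.
by rewrite -leq_subRL ?IH.
Qed.

Lemma big_nat_addn_split (F : nat -> nat) m n :
  (\sum_(0 <= p < m + n) F p = \sum_(0 <= p < m) F p + \sum_(0 <= p < n) F (p + m))%N.
Proof.
rewrite (big_cat_nat _ (leq_addr n m)) //=; congr (_ + _)%N.
by rewrite -{1}[m]add0n big_addn addKn.
Qed.

Lemma count_same_block ks :
  (\sum_(0 <= p < sumn ks) \sum_(0 <= q < sumn ks)
     (block_start ks p == block_start ks q) = \sum_(kj <- ks) kj ^ 2)%N.
Proof.
elim: ks => [|kj ks IH]; first by rewrite big_nil big_geq.
have head p : (p < kj)%N -> block_start (kj :: ks) p = 0%N by move=> /= ->.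
have tail p : block_start (kj :: ks) (p + kj) = (kj + block_start ks p)%N.
  by rewrite /= ltnNge leq_addl /= addnK.
rewrite big_cons [sumn _]/= big_nat_addn_split; congr (_ + _)%N.
  rewrite (eq_big_nat _ _ (F2 := fun=> kj)) ?sum_nat_const_nat ?subn0 //.
  move=> p /andP[_ p_lt]; rewrite big_nat_addn_split.
  rewrite (eq_big_nat _ _ (F2 := fun=> 1%N)) ?sum_nat_const_nat ?subn0 ?muln1.
    rewrite big1_seq ?addn0 // => q _; rewrite (head p p_lt) tail.
    by case: kj p_lt {head tail}.
  by move=> q /andP[_ q_lt]; rewrite !head.
rewrite (eq_big_nat _ _ (F2 := fun p => \sum_(0 <= q < sumn ks)
  (block_start ks p == block_start ks q)))%N ?IH // => p _.
rewrite big_nat_addn_split big_nat_cond big1 ?add0n => [|q /andP[/andP[_ q_lt] _]].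
  by apply: eq_bigr => q _; rewrite !tail eqn_add2l.
by rewrite (head q q_lt) tail; case: kj q_lt {head tail}.
Qed.

Lemma sum_incidence (R : pzRingType) (T : finType) (h : T -> T) :
  \sum_(p : T) \sum_(q : T)
     ((h p == h q)%:R - (h p == q)%:R - (p == h q)%:R + (p == q)%:R) =
  \sum_(p : T) \sum_(q : T) (h p == h q)%:R - #|T|%:R :> R.
Proof.
have indicator (c : T) : \sum_(q : T) (c == q)%:R = 1 :> R.
  rewrite (bigD1 c) //= eqxx big1 ?addr0 // => q.
  by rewrite eq_sym => /negbTE ->.
under eq_bigr do rewrite !big_split /= !sumrN !indicator.
rewrite !big_split /= !sumrN [X in _ - X + _]exchange_big /=.
under [X in _ - X + _]eq_bigr do under eq_bigr do rewrite eq_sym.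
under [X in _ - X + _]eq_bigr do rewrite indicator.
by rewrite sumr_const subrK.
Qed.

Section Synchronization.
Variables (R : realType) (N : nat) (ks : seq nat).
Local Notation k := (sumn ks).
Local Notation injf := {ffun 'I_k -> 'I_N}.

Definition block_head (p : 'I_k) : 'I_k := insubd p (block_start ks p).

Lemma val_block_head p : val (block_head p) = block_start ks p.
Proof. by rewrite val_insubd (leq_ltn_trans (block_start_le ks p)). Qed.

Lemma count_same_block_head :
  \sum_(p < k) \sum_(q < k) (block_head p == block_head q)%:R =
  (\sum_(kj <- ks) kj ^ 2)%N%:R :> R.
Proof.
rewrite -count_same_block big_mkord natr_sum; apply: eq_bigr => p _.
by rewrite big_mkord natr_sum; apply: eq_bigr => q _; rewrite -val_eqE !val_block_head.
Qed.

Lemma sum_sync (t : injf) (x : 'I_N -> R) (h : R -> R) : injectiveb t ->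
  \sum_(m < N) h (sync ks t x m) =
  \sum_(m < N) h (x m) + \sum_(p < k) (h (x (t (block_head p))) - h (x (t p))).
Proof.
move=> /injectiveP t_inj; apply/eqP; rewrite addrC -subr_eq -sumrB; apply/eqP.
have moved m : h (sync ks t x m) - h (x m) =
    \sum_(p < k | t p == m) (h (x (t (block_head p))) - h (x m)).
  rewrite /sync; case: pickP => [p0 /eqP <- | none]; last by rewrite big_pred0 ?subrr.
  by rewrite (eq_bigl (pred1 p0)) ?big_pred1_eq // => p; rewrite /= (inj_eq t_inj).
rewrite (eq_bigr _ (fun m _ => moved m)) (exchange_big_dep predT) //=.
by apply: eq_bigr => p _; rewrite (eq_bigl (pred1 (t p))) ?big_pred1_eq.
Qed.

End Synchronization.

Section SynchronizationVariance.
Variables (R : realType) (N : nat) (ks : seq nat) (x : 'I_N -> R).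
Hypothesis N_gt1 : (1 < N)%N.
Local Notation k := (sumn ks).
Local Notation injf := {ffun 'I_k -> 'I_N}.
Local Notation h := (@block_head ks).

(* [c2] counts the injective tuples taking two given distinct values at two given
   positions; [D] is [N (N - 1) V x]. *)
Let c2 : R := (N ^_ k)%:R / (N%:R * (N%:R - 1)).
Let D : R := N%:R * psum2 x - psum1 x ^+ 2.

Lemma sum_injf_mul a b :
  \sum_(t : injf | injectiveb t) x (t a) * x (t b) =
  c2 * (psum1 x ^+ 2 - psum2 x) + (a == b)%:R * c2 * D.
Proof.
have [<-|ab] := eqVneq a b; last first.
  by rewrite mulr0n !mul0r addr0 (sum_injf_eval2 (fun u v => x u * x v) ab)
    sum_offdiag_mul.
rewrite mulr1n mul1r (sum_injf_eval1 _ (fun u => x u * x u)) /c2 /D.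
under eq_bigr do rewrite -expr2.
rewrite -/(psum2 x); field.
by have := @natrM_subn1_neq0 R N N_gt1; rewrite mulf_eq0 negb_or andbC.
Qed.

Lemma sum_injf_mul_diff a b c d :
  \sum_(t : injf | injectiveb t) (x (t a) - x (t b)) * (x (t c) - x (t d)) =
  c2 * D * ((a == c)%:R - (a == d)%:R - (b == c)%:R + (b == d)%:R).
Proof.
rewrite (eq_bigr (fun t : injf => x (t a) * x (t c) - x (t a) * x (t d)
  - x (t b) * x (t c) + x (t b) * x (t d))) => [|t _]; last by ring.
by rewrite !big_split /= !sumrN !sum_injf_mul; ring.
Qed.

Lemma sum_injf_sync_sqr :
  \sum_(t : injf | injectiveb t) (\sum_(p < k) (x (t (h p)) - x (t p))) ^+ 2 =
  c2 * D * ((\sum_(kj <- ks) kj ^ 2)%N%:R - k%:R).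
Proof.
rewrite -count_same_block_head -[k in k%:R]card_ord -(@sum_incidence R _ h) mulr_sumr.
under eq_bigr do rewrite expr2 mulr_suml; rewrite exchange_big /=.
apply: eq_bigr => p _; under eq_bigr do rewrite mulr_sumr.
rewrite exchange_big mulr_sumr /=; apply: eq_bigr => q _.
by rewrite sum_injf_mul_diff.
Qed.

Lemma sum_injf_sync_diff (f : R -> R) :
  \sum_(t : injf | injectiveb t) \sum_(p < k) (f (x (t (h p))) - f (x (t p))) = 0.
Proof.
rewrite exchange_big big1 // => p _.
by rewrite sumrB (sum_injf_eval1 (h p) (fun u => f (x u)))
  (sum_injf_eval1 p (fun u => f (x u))) subrr.
Qed.

Lemma Ls_Vfun delta : (k <= N)%N ->
  @Ls R N k ks delta (@Vfun R N) x =
  - (delta * @kappa R k ks / (N * (N - 1))%:R * Vfun x).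
Proof.
move=> k_le_N; set c := ((N * (N - 1))%:R : R)^-1.
pose sync_diff (f : R -> R) (t : injf) := \sum_(p < k) (f (x (t (h p))) - f (x (t p))).
have jump (t : injf) : injectiveb t -> Vfun (sync ks t x) - Vfun x =
    c * (N%:R * sync_diff (fun r => r ^+ 2) t
         - 2 * psum1 x * sync_diff id t - sync_diff id t ^+ 2).
  move=> t_inj; rewrite !Vfun_psum -/c /psum1 /psum2.
  rewrite (sum_sync _ (fun r => r ^+ 2) t_inj) (sum_sync _ id t_inj) /=.
  by rewrite -/(psum1 x) -/(psum2 x) /sync_diff /=; ring.
rewrite /Ls (eq_bigr _ jump) -mulr_sumr !sumrB -!mulr_sumr !sum_injf_sync_diff.
rewrite sum_injf_sync_sqr Vfun_psum /c2 /D /kappa /c natrM_subn1 ?(ltnW N_gt1) //.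
have nInj_neq0 : (N ^_ k)%:R != 0 :> R by rewrite pnatr_eq0 -lt0n ffact_gt0.
have := @natrM_subn1_neq0 R N N_gt1; rewrite mulf_eq0 negb_or => /andP[N_neq0 N1_neq0].
by field; rewrite nInj_neq0 N_neq0 N1_neq0.
Qed.

End SynchronizationVariance.

Lemma sumn_lt_sum_sqr ks : all (fun kj => 2 <= kj)%N ks -> ks != [::] ->
  (sumn ks < \sum_(kj <- ks) kj ^ 2)%N.
Proof.
elim: ks => [|kj ks IH] //= /andP[kj_ge2 ks_ge2] _; rewrite big_cons.
have kj_lt : (kj < kj ^ 2)%N by rewrite -{1}[kj]muln1 expnS expn1 ltn_pmul2l ?(ltnW kj_ge2).
case: ks IH ks_ge2 => [|kj' ks] IH ks_ge2; first by rewrite big_nil !addn0.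
by rewrite -addnS leq_add ?IH ?(ltnW kj_lt).
Qed.

Theorem lemma2 (R : realType) (N k : nat) (ks : seq nat)
  (alpha delta : R) (rho : probability R R) :
  (2 <= k)%N -> all (fun kj => 2 <= kj)%N ks -> sumn ks = k -> (k <= N)%N ->
  0 < alpha -> 0 < delta ->
  compact_support rho -> 0 < Rintegral rho setT (fun z => z ^+ 2) ->
  0 < @kappa R k ks /\
  forall x : 'I_N -> R,
    @Lgen R N k ks alpha rho delta (@Vfun R N) x =
      alpha * Rintegral rho setT (fun z => z ^+ 2)
      - delta * @kappa R k ks / (N * (N - 1))%:R * @Vfun R N x.
Proof.
move=> k_ge2 blocks_ge2 sum_ks k_le_N _ _ _ m2_gt0; subst k.
have N_gt1 : (1 < N)%N := leq_trans k_ge2 k_le_N.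
split.
  rewrite /kappa subr_gt0 ltr_nat sumn_lt_sum_sqr //.
  by apply: contraTneq k_ge2 => ->.
by move=> x; rewrite /Lgen L0_Vfun ?Ls_Vfun.
Qed.
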